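(* Let $m,p,n$ be positive integers with $p\mid m$ and $n>1$, and let $\boldsymbol\theta=(\theta_1,\dots,\theta_n)$ be the basic polynomial map of $G(m,p,n)$ described in the context. Consider the map $\pi:\mathbb C^n\to\mathbb C^{n-1}$, $\pi(z_1,\ldots,z_n)=(\gamma_1z_1,\ldots,\gamma_{n-1}z_{n-1})$ with $\gamma_i=\frac{n-i}{n}$, $i=1,\ldots,n-1$. Then $\pi(\overline{\boldsymbol\Theta}_n)\subseteq\Gamma_{n-1}$.
   Context: Put $q=m/p$. $G(m,p,n)$ is the group of $n\times n$ monomial matrices whose nonzero entries are $m$-th roots of unity and whose product of nonzero entries is an $(m/p)$-th root of unity. Let $s_i$ denote the $i$-th elementary symmetric polynomial. For $1\le i\le n-1$, $\theta_i(z)=s_i(z_1^m,\ldots,z_n^m)$, and $\theta_n(z)=(z_1\cdots z_n)^q$. Put $\boldsymbol\Theta_n=\boldsymbol\theta(\mathbb D^n)$, so that $\overline{\boldsymbol\Theta}_n=\boldsymbol\theta(\overline{\mathbb D}^n)$. For $k\ge1$, $\Gamma_k=\boldsymbol s(\overline{\mathbb D}^k)$ is the closed symmetrized polydisc, where $\boldsymbol s=(s_1,\dots,s_k)$ on $\mathbb C^k$. *)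

From mathcomp Require Import all_boot all_order all_algebra.
From mathcomp Require Import reals complex.
Set Implicit Arguments. Unset Strict Implicit. Unset Printing Implicit Defensive.
Import Order.TTheory GRing.Theory Num.Theory.
Local Open Scope ring_scope.

Section Defs.
Variable R : realType.
Local Notation C := R[i].

Definition esym (k : nat) (x : 'I_k -> C) (i : nat) : C :=
  \sum_(I : {set 'I_k} | #|I| == i) \prod_(j in I) x j.

Definition in_cpolydisc (k : nat) (x : 'I_k -> C) : Prop :=
  forall j, `|x j| <= 1.

Definition Gamma (k : nat) (y : 'I_k -> C) : Prop :=
  exists x : 'I_k -> C, in_cpolydisc x /\ forall i : 'I_k, y i = esym x i.+1.

(* basic polynomial map theta of G(m,p,n); component i : 'I_n is theta_{i+1} *)
Definition theta (m p n : nat) (z : 'I_n -> C) (i : 'I_n) : C :=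
  if (i.+1 < n)%N then esym (fun j => z j ^+ m) i.+1
  else (\prod_(j < n) z j) ^+ (m %/ p).

Definition Thetabar (m p n : nat) (y : 'I_n -> C) : Prop :=
  exists z : 'I_n -> C, in_cpolydisc z /\ forall i, y i = theta m p z i.

Definition piproj (n : nat) (y : 'I_n -> C) (i : 'I_n.-1) : C :=
  ((n - i.+1)%:R / n%:R) * y (widen_ord (leq_pred n) i).
End Defs.

(* With w_j = z_j^m in the closed unit disc, the polynomial P = prod_j (X - w_j)
   has coefficients (-1)^i theta_i(z) for i < n.  Its derivative factors as
   n prod_k (X - zeta_k), and comparing coefficients gives
   s_i(zeta) = (n - i)/n s_i(w) = gamma_i theta_i(z).  By Gauss-Lucas the
   critical points zeta_k lie in the convex hull of the w_j, hence in the
   closed unit disc. *)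

From Pilot Require Import Defs.
From mathcomp Require Import all_boot all_order all_algebra.
From mathcomp Require Import reals complex.
Import Order.TTheory GRing.Theory Num.Theory.
Local Open Scope ring_scope.

Lemma size_deriv {F : numDomainType} (p : {poly F}) : size p^`() = (size p).-1.
Proof.
have [lep1|lt1p] := leqP (size p) 1.
  by rewrite {1}[p]size1_polyC // derivC size_poly0 -subn1 (eqnP lep1).
rewrite size_poly_eq // mulrn_eq0 -subn2 -subSn // subn2.
by rewrite lead_coef_eq0 -size_poly_eq0 -(subnKC lt1p).
Qed.

Lemma horner_deriv_prod_XsubC (F : fieldType) (s : seq F) (r : F) : r \notin s ->
  (\prod_(a <- s) ('X - a%:P))^`().[r] =
  (\prod_(a <- s) (r - a)) * \sum_(a <- s) (r - a)^-1.
Proof.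
elim: s => [|a s IHs]; first by rewrite !big_nil derivC horner0 mulr0.
rewrite inE negb_or => /andP[r_neq_a r_notin_s].
have ra_neq0 : r - a != 0 by rewrite subr_eq0.
rewrite !big_cons derivM derivXsubC mul1r hornerD hornerM IHs // !hornerE horner_prod.
rewrite mulrDr mulrAC divff // mul1r; congr (_ + _).
by apply: eq_bigr => b _; rewrite !hornerE.
Qed.

Lemma norm_le1_barycenter (F : numDomainType) (I : eqType) (s : seq I) (c w : I -> F) (r : F) :
  {in s, forall j, 0 <= c j} -> 0 < \sum_(j <- s) c j -> {in s, forall j, `|w j| <= 1} ->
  (\sum_(j <- s) c j) * r = \sum_(j <- s) c j * w j -> `|r| <= 1.
Proof.
move=> c_ge0 sum_gt0 w_le1 bary.
rewrite -(ler_pM2l sum_gt0) mulr1 -{1}[\sum_(j <- s) c j]ger0_norm ?(ltW sum_gt0) //.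
rewrite -normrM bary (le_trans (ler_norm_sum _ _ _)) // big_seq_cond [X in _ <= X]big_seq_cond.
by rewrite ler_sum // => j /andP[js _]; rewrite normrM ger0_norm ?c_ge0 // ler_piMr ?c_ge0 ?w_le1.
Qed.

Lemma gauss_lucas_unit_disc (C : numClosedFieldType) (s : seq C) (r : C) :
  (0 < size s)%N -> {in s, forall a, `|a| <= 1} ->
  root (\prod_(a <- s) ('X - a%:P))^`() r -> `|r| <= 1.
Proof.
move=> s_gt0 s_le1 /rootP root_r.
have [/s_le1 // | r_notin_s] := boolP (r \in s).
have sum_inv0 : \sum_(a <- s) (r - a)^-1 = 0.
  move: root_r; rewrite horner_deriv_prod_XsubC // => /eqP; rewrite mulf_eq0.
  case/orP=> [|/eqP//]; rewrite prodf_seq_eq0 => /hasP[a a_s].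
  by rewrite subr_eq0 => /eqP ra; rewrite ra a_s in r_notin_s.
(* [1 / (r - a) = |r - a|^-2 (r - a)^*], so [r^*] is a positive barycenter of the [a^*]. *)
pose c a := `|r - a| ^- 2.
have c_ge0 a : 0 <= c a by rewrite invr_ge0 exprn_ge0.
have s0 := mem_nth 0 s_gt0.
rewrite -norm_conjC; apply: (@norm_le1_barycenter _ _ s c Num.conj).
- by move=> a _.
- rewrite (big_rem _ s0) ltr_wpDr ?sumr_ge0 //.
  rewrite invr_gt0 exprn_gt0 // normr_gt0 subr_eq0.
  by apply: contraNneq r_notin_s => ->.
- by move=> a /s_le1; rewrite norm_conjC.
apply/eqP; rewrite mulr_suml -subr_eq0 -sumrB; apply/eqP.
rewrite -[RHS]sum_inv0; apply: eq_bigr => a _.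
by rewrite invC_norm rmorphB mulrBr.
Qed.

Lemma deriv_prod_XsubC_factor (C : numClosedFieldType) (s : seq C) : (0 < size s)%N ->
  exists2 r : seq C, size r = (size s).-1 &
    (\prod_(a <- s) ('X - a%:P))^`() = (size s)%:R *: \prod_(b <- r) ('X - b%:P).
Proof.
move=> s_gt0; set P := \prod_(a <- s) _.
have size_P : size P = (size s).+1 by rewrite size_prod_XsubC.
have ns_neq0 : (size s)%:R != 0 :> C by rewrite pnatr_eq0 -lt0n.
have lead_P' : lead_coef P^`() = (size s)%:R.
  rewrite lead_coefE size_deriv size_P coef_deriv prednK //.
  by have := lead_coef_prod_XsubC s xpredT id; rewrite lead_coefE size_P => ->.
have [r def_P'] := closed_field_poly_normal P^`().
exists r; last by rewrite def_P' lead_P'.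
have := size_deriv P; rewrite {1}def_P' size_scale ?lead_P' //.
by rewrite size_prod_XsubC size_P /= => <-.
Qed.

Section ElementarySymmetric.
Variable R : realType.
Local Notation C := R[i].

Lemma coef_prod_XsubC_esym (k : nat) (a : 'I_k -> C) (i : nat) : (i <= k)%N ->
  (\prod_(j < k) ('X - (a j)%:P))`_(k - i) = (-1) ^+ i * Defs.esym a i.
Proof.
move=> le_ik.
have -> : \prod_(j < k) ('X - (a j)%:P) = \prod_(j < k) ((- a j)%:P + 'X).
  by apply: eq_bigr => j _; rewrite polyCN addrC.
rewrite bigA_distr coef_sum /Defs.esym mulr_sumr [RHS]big_mkcond /=.
apply: eq_bigr => J _.
have le_Jk : (#|J| <= k)%N by have := max_card J; rewrite card_ord.
have expand : \prod_j (if j \in J then (- a j)%:P else 'X) =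
              (\prod_(j in J) - a j)%:P * 'X^(k - #|J|).
  rewrite (bigID (mem J)) /= rmorph_prod; congr (_ * _).
    by apply: eq_bigr => j ->.
  rewrite (eq_bigr (fun _ => 'X)) => [|j /negbTE-> //].
  rewrite prodr_const; congr ('X^_); apply/eqP.
  by rewrite -(eqn_add2l #|J|) cardC card_ord subnKC.
rewrite expand coefCM coefXn eqn_sub2lE // eq_sym.
by case: eqP => [<-|_]; rewrite ?mulr1 ?prodrN ?mulr0.
Qed.

Lemma esym_critical_points (k : nat) (w : 'I_k.+1 -> C) (x : 'I_k -> C) (i : nat) :
  (\prod_(j < k.+1) ('X - (w j)%:P))^`() = k.+1%:R *: \prod_(j < k) ('X - (x j)%:P) ->
  (i <= k)%N -> Defs.esym x i = (k.+1 - i)%:R / k.+1%:R * Defs.esym w i.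
Proof.
move=> def_P' le_ik; have k1_neq0 : k.+1%:R != 0 :> C by rewrite pnatr_eq0.
have := congr1 (fun p : {poly C} => p`_(k - i)) def_P'.
rewrite /= coef_deriv coefZ -subSn // !coef_prod_XsubC_esym ?leqW //.
rewrite -[_ *+ _]mulr_natl => /(congr1 ( *%R ((-1) ^+ i))).
rewrite [LHS]mulrCA [RHS]mulrCA !signrMK => e.
by rewrite mulrAC e mulrAC mulfV // mul1r.
Qed.
End ElementarySymmetric.

Theorem lemma2p6 (R : realType) (m p n : nat) :
  (0 < m)%N -> (0 < p)%N -> (0 < n)%N -> (p %| m)%N -> (1 < n)%N ->
  forall y : 'I_n -> R[i], Thetabar m p y -> Gamma (piproj y).
Proof.
move=> _ _ _ _; case: n => // k _ y [z [z_le1 def_y]].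
pose w j := z j ^+ m.
pose s := [seq w j | j <- index_enum 'I_k.+1].
have size_s : size s = k.+1 by rewrite size_map [index_enum _]unlock -enumT size_enum_ord.
have s_gt0 : (0 < size s)%N by rewrite size_s.
have [r] := @deriv_prod_XsubC_factor _ s s_gt0; rewrite size_s /= => size_r def_P'.
exists (fun j : 'I_k => r`_j); split => [j|i].
  apply: (@gauss_lucas_unit_disc _ s _ s_gt0).
    by move=> _ /mapP[l _ ->]; rewrite normrX exprn_ile1.
  by rewrite def_P' rootZ ?pnatr_eq0 // root_prod_XsubC mem_nth // size_r.
rewrite /piproj def_y /theta /= ltnS (ltn_ord i) (@esym_critical_points _ k w) //.
by move: def_P'; rewrite big_map [X in _ *: X](big_nth 0) size_r big_mkord.
Qed.
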